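(* Under the hypotheses of the one-step equivalence result (with $ev$, $rb$, $su=ev$, $hy$ as defined there), $hy$ absorbs $ev$: $hy\circ ev = hy$ as partial functions on terms.
   Context: Terms: $\Lambda ::= x\mid\lambda x.\Lambda\mid\Lambda\Lambda$; $[N/x]B$ is capture-avoiding substitution. An evaluator is a partial function $\Lambda\rightharpoonup\Lambda$ defined by inference rules, undefined where no finite derivation exists; $\mathrm{id}$ is the identity; composition is undefined where the inner evaluator is. Eval-apply template: given evaluators $la,op_1,ar_1,op_2,ar_2$ (possibly $ea$ itself), $ea$ is defined by (var) $ea(x)=x$; (abs) $ea(\lambda x.B)=\lambda x.B'$ if $la(B)=B'$; (con) $ea(MN)=B'$ if $op_1(M)=\lambda x.B$, $ar_1(N)=N'$, $ea([N'/x]B)=B'$; (neu) $ea(MN)=M''N'$ if $op_1(M)=M'$, $M'$ not an abstraction, $op_2(M')=M''$, $ar_2(N)=N'$. $ev$ is a uniform evaluator: $op_1=ev$, $op_2=\mathrm{id}$, $la=la_e$, $ar_1=ar1_e$, $ar_2=ar2_e$ with each in $\{\mathrm{id},ev\}$. Readback: $rb(x)=x$; $rb(\lambda x.B)=\lambda x.B'$ if $la_r(B)=B'$; $rb(MN)=M'N'$ if $rb(M)=M'$, $ar2_r(N)=N'$, subject to: for $p\in\{la,ar2\}$, $p_r\in\{\mathrm{id},ev,rb\circ ev\}$ if $p_e=\mathrm{id}$ and $p_r\in\{\mathrm{id},rb\}$ if $p_e=ev$; at least one of $la_r,ar2_r$ is in $\{ev, rb\circ ev\}$ and at least one is in $\{rb,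 rb\circ ev\}$. $su:=ev$ and $hy$ is the template instance with $op_1=su$, $ar_1=ar1_e$, $op_2=hy$, $la=la_h$, $ar_2=ar2_h$ where for $p\in\{la,ar2\}$: $p_h=\mathrm{id}$ if $p_r=p_e=\mathrm{id}$; $p_h=su$ if $(p_r,p_e)\in\{(\mathrm{id},ev),(ev,\mathrm{id})\}$; $p_h=hy$ if $p_r\in\{rb, rb\circ ev\}$. A strategy $st_2$ absorbs $st_1$ iff $st_2\circ st_1=st_2$. *)

From Stdlib Require Import Arith.

Inductive term : Type :=
| Var : nat -> term
| Lam : term -> term
| App : term -> term -> term.

Fixpoint lift (c : nat) (t : term) : term :=
  match t with
  | Var n => if c <=? n then Var (S n) else Var n
  | Lam b => Lam (lift (S c) b)
  | App m n => App (lift c m) (lift c n)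
  end.

(* capture-avoiding substitution [u/k]t, removing binder index k *)
Fixpoint subst (k : nat) (u : term) (t : term) : term :=
  match t with
  | Var n => if n =? k then u else if k <? n then Var (pred n) else Var n
  | Lam b => Lam (subst (S k) (lift 0 u) b)
  | App m n => App (subst k u m) (subst k u n)
  end.

Definition beta (B N : term) : term := subst 0 N B.

Definition is_abs (t : term) : Prop :=
  match t with Lam _ => True | _ => False end.

(* choices of the uniform evaluator ev: each of la_e, ar1_e, ar2_e is id or ev *)
Inductive echoice := EId | EEv.

(* choices of the readback: id, ev, rb, or rb o ev *)
Inductive rchoice := RId | REv | RRb | RRbEv.

(* choices of the hybrid: id, su (= ev), or hy *)
Inductive hchoice := HId | HSu | HHy.

Section Evaluators.
Variables (la_e ar1_e ar2_e : echoice).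

(* the uniform evaluator ev: op1 = ev, op2 = id *)
Inductive ev : term -> term -> Prop :=
| ev_var x : ev (Var x) (Var x)
| ev_abs_id B : la_e = EId -> ev (Lam B) (Lam B)
| ev_abs_ev B B' : la_e = EEv -> ev B B' -> ev (Lam B) (Lam B')
| ev_con M N B N' B' :
    ev M (Lam B) ->
    (ar1_e = EId /\ N' = N \/ ar1_e = EEv /\ ev N N') ->
    ev (beta B N') B' -> ev (App M N) B'
| ev_neu M N M' N' :
    ev M M' -> ~ is_abs M' ->
    (ar2_e = EId /\ N' = N \/ ar2_e = EEv /\ ev N N') ->
    ev (App M N) (App M' N').

Variables (la_r ar2_r : rchoice).

Inductive rb : term -> term -> Prop :=
| rb_var x : rb (Var x) (Var x)
| rb_abs B B' :
    (la_r = RId /\ B' = B \/ la_r = REv /\ ev B B' \/ la_r = RRb /\ rb B B'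
     \/ la_r = RRbEv /\ exists B0, ev B B0 /\ rb B0 B') ->
    rb (Lam B) (Lam B')
| rb_app M N M' N' :
    rb M M' ->
    (ar2_r = RId /\ N' = N \/ ar2_r = REv /\ ev N N' \/ ar2_r = RRb /\ rb N N'
     \/ ar2_r = RRbEv /\ exists N0, ev N N0 /\ rb N0 N') ->
    rb (App M N) (App M' N').

End Evaluators.

Definition compat (pe : echoice) (pr : rchoice) : Prop :=
  match pe, pr with
  | EId, (RId | REv | RRbEv) => True
  | EEv, (RId | RRb) => True
  | _, _ => False
  end.

Definition is_ev_like (pr : rchoice) : Prop :=
  match pr with REv | RRbEv => True | _ => False end.
Definition is_rb_like (pr : rchoice) : Prop :=
  match pr with RRb | RRbEv => True | _ => False end.

Definition valid_params (la_e ar2_e : echoice) (la_r ar2_r : rchoice) : Prop :=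
  compat la_e la_r /\ compat ar2_e ar2_r /\
  (is_ev_like la_r \/ is_ev_like ar2_r) /\
  (is_rb_like la_r \/ is_rb_like ar2_r).

(* p_h = id if p_r = p_e = id; su if (p_r,p_e) in {(id,ev),(ev,id)};
   hy if p_r in {rb, rb o ev}.  (Other combinations are excluded by compat.) *)
Definition hchoice_of (pe : echoice) (pr : rchoice) : hchoice :=
  match pr, pe with
  | RId, EId => HId
  | RId, EEv => HSu
  | REv, _ => HSu
  | RRb, _ => HHy
  | RRbEv, _ => HHy
  end.

Section Hybrid.
Variables (la_e ar1_e ar2_e : echoice) (la_h ar2_h : hchoice).

Notation su := (ev la_e ar1_e ar2_e).

(* the hybrid hy: op1 = su, ar1 = ar1_e, op2 = hy, la = la_h, ar2 = ar2_h *)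
Inductive hy : term -> term -> Prop :=
| hy_var x : hy (Var x) (Var x)
| hy_abs B B' :
    (la_h = HId /\ B' = B \/ la_h = HSu /\ su B B' \/ la_h = HHy /\ hy B B') ->
    hy (Lam B) (Lam B')
| hy_con M N B N' B' :
    su M (Lam B) ->
    (ar1_e = EId /\ N' = N \/ ar1_e = EEv /\ su N N') ->
    hy (beta B N') B' -> hy (App M N) B'
| hy_neu M N M' M'' N' :
    su M M' -> ~ is_abs M' -> hy M' M'' ->
    (ar2_h = HId /\ N' = N \/ ar2_h = HSu /\ su N N' \/ ar2_h = HHy /\ hy N N') ->
    hy (App M N) (App M'' N').

End Hybrid.

(* [ev] is deterministic and idempotent: whatever it returns is left unchanged by
   a second run.  At every position where [ev] evaluates a subterm, [hy] never
   takes the identity (it uses [su = ev] or itself there), so running [hy] on the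
   result of [ev] either redoes [ev]'s work for nothing or continues from it; this
   gives [hy o ev <= hy].  Conversely every derivation of [hy t t'] factors through
   the value of [ev] at [t] assembled from its own [su]-subderivations. *)

(* The argument-position premises of [ev] and [hy], abstracted over the relation
   used for the evaluating alternatives, so that induction hypotheses can ride along. *)
Definition estep (pe : echoice) (R : term -> term -> Prop) (N N' : term) : Prop :=
  pe = EId /\ N' = N \/ pe = EEv /\ R N N'.

Definition hstep (ph : hchoice) (S R : term -> term -> Prop) (N N' : term) : Prop :=
  ph = HId /\ N' = N \/ ph = HSu /\ S N N' \/ ph = HHy /\ R N N'.

Lemma estep_impl pe (R R' : term -> term -> Prop) N N' :
  (forall a b, R a b -> R' a b) -> estep pe R N N' -> estep pe R' N N'.
Proof. intros HR [[e E] | [e H]]; [left | right]; auto. Qed.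

Lemma hstep_impl ph (S R R' : term -> term -> Prop) N N' :
  (forall a b, R a b -> R' a b) -> hstep ph S R N N' -> hstep ph S R' N N'.
Proof. intros HR [[e E] | [[e H] | [e H]]]; [left | right; left | right; right]; auto. Qed.

Lemma estep_functional pe (R : term -> term -> Prop) N N1 N2 :
  estep pe (fun a b => R a b /\ forall c, R a c -> b = c) N N1 ->
  estep pe R N N2 -> N1 = N2.
Proof.
  intros [[e1 E1] | [e1 [H1 U]]] [[e2 E2] | [e2 H2]]; subst; try discriminate; auto.
Qed.

Lemma hchoice_of_EEv_neq_id (pr : rchoice) : hchoice_of EEv pr <> HId.
Proof. destruct pr; discriminate. Qed.

Section Uniform.
Variables (la_e ar1_e ar2_e : echoice).
Notation EV := (ev la_e ar1_e ar2_e).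

(* The generated [ev_ind] gives no induction hypothesis for premises nested in a
   disjunction. *)
Lemma ev_ind_nested (P : term -> term -> Prop) :
  (forall x, P (Var x) (Var x)) ->
  (forall B, la_e = EId -> P (Lam B) (Lam B)) ->
  (forall B B', la_e = EEv -> EV B B' -> P B B' -> P (Lam B) (Lam B')) ->
  (forall M N B N' B', EV M (Lam B) -> P M (Lam B) ->
     estep ar1_e (fun a b => EV a b /\ P a b) N N' ->
     EV (beta B N') B' -> P (beta B N') B' -> P (App M N) B') ->
  (forall M N M' N', EV M M' -> P M M' -> ~ is_abs M' ->
     estep ar2_e (fun a b => EV a b /\ P a b) N N' ->
     P (App M N) (App M' N')) ->
  forall t m, EV t m -> P t m.
Proof.
  intros Hvar Habs_id Habs_ev Hcon Hneu.
  refine (fix F t m (H : EV t m) {struct H} : P t m := _).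
  destruct H as [x | B e | B B' e HB | M N B N' B' HM HN HB | M N M' N' HM Hna HN].
  - apply Hvar.
  - exact (Habs_id B e).
  - exact (Habs_ev B B' e HB (F _ _ HB)).
  - apply (Hcon M N B N' B' HM (F _ _ HM)); [| exact HB | exact (F _ _ HB)].
    destruct HN as [HN | [e HN]]; [left; exact HN | right; exact (conj e (conj HN (F _ _ HN)))].
  - apply (Hneu M N M' N' HM (F _ _ HM) Hna).
    destruct HN as [HN | [e HN]]; [left; exact HN | right; exact (conj e (conj HN (F _ _ HN)))].
Qed.

Lemma ev_deterministic t m1 : EV t m1 -> forall m2, EV t m2 -> m1 = m2.
Proof.
  revert t m1.
  apply (ev_ind_nested (fun t m1 => forall m2, EV t m2 -> m1 = m2)).
  - intros x m2 H; inversion H; reflexivity.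
  - intros B e m2 H; inversion H; subst; congruence.
  - intros B B' e HB IHB m2 H; inversion H; subst; [congruence | f_equal; auto].
  - intros M N B N' B' HM IHM HN HB IHB m2 H.
    inversion H as [| | | M0 N0 B0 N0' B0' HM0 HN0 HB0 | M0 N0 M0' N0' HM0 Hna0 HN0]; subst.
    + assert (EB : Lam B = Lam B0) by auto. injection EB as <-.
      rewrite (estep_functional _ _ _ _ _ HN HN0) in IHB. auto.
    + rewrite <- (IHM _ HM0) in Hna0. contradiction (Hna0 I).
  - intros M N M' N' HM IHM Hna HN m2 H.
    inversion H as [| | | M0 N0 B0 N0' B0' HM0 HN0 HB0 | M0 N0 M0' N0' HM0 Hna0 HN0]; subst.
    + rewrite (IHM _ HM0) in Hna. contradiction (Hna I).
    + f_equal; [auto | exact (estep_functional _ _ _ _ _ HN HN0)].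
Qed.

Lemma ev_idempotent t m : EV t m -> EV m m.
Proof.
  revert t m.
  apply (ev_ind_nested (fun _ m => EV m m)).
  - intros x; apply ev_var.
  - intros B e; apply ev_abs_id, e.
  - intros B B' e _ IH; apply ev_abs_ev; assumption.
  - auto.
  - intros M N M' N' _ IHM Hna HN. apply ev_neu; [assumption | assumption |].
    destruct HN as [[e _] | [e [_ IHN]]]; [left | right]; auto.
Qed.

Lemma ev_fixed t m m' : EV t m -> EV m m' -> m' = m.
Proof. intros Ht Hm. exact (ev_deterministic _ _ Hm _ (ev_idempotent _ _ Ht)). Qed.

Lemma ev_trans t m m' : EV t m -> EV m m' -> EV t m'.
Proof. intros Ht Hm. rewrite (ev_fixed _ _ _ Ht Hm). exact Ht. Qed.

Lemma ev_Lam_of_estep B B' : estep la_e EV B B' -> EV (Lam B) (Lam B').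
Proof. intros [[e ->] | [e H]]; [apply ev_abs_id | apply ev_abs_ev]; assumption. Qed.

Variables (la_h ar2_h : hchoice).
Notation HY := (hy la_e ar1_e ar2_e la_h ar2_h).

Lemma hy_ind_nested (P : term -> term -> Prop) :
  (forall x, P (Var x) (Var x)) ->
  (forall B B', hstep la_h EV (fun a b => HY a b /\ P a b) B B' -> P (Lam B) (Lam B')) ->
  (forall M N B N' B', EV M (Lam B) -> estep ar1_e EV N N' ->
     HY (beta B N') B' -> P (beta B N') B' -> P (App M N) B') ->
  (forall M N M' M'' N', EV M M' -> ~ is_abs M' -> HY M' M'' -> P M' M'' ->
     hstep ar2_h EV (fun a b => HY a b /\ P a b) N N' ->
     P (App M N) (App M'' N')) ->
  forall t m, HY t m -> P t m.
Proof.
  intros Hvar Habs Hcon Hneu.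
  refine (fix F t m (H : HY t m) {struct H} : P t m := _).
  destruct H as [x | B B' HB | M N B N' B' HM HN HB | M N M' M'' N' HM Hna HM' HN].
  - apply Hvar.
  - apply Habs.
    destruct HB as [HB | [HB | [e HB]]];
      [left; exact HB | right; left; exact HB | right; right; exact (conj e (conj HB (F _ _ HB)))].
  - exact (Hcon M N B N' B' HM HN HB (F _ _ HB)).
  - apply (Hneu M N M' M'' N' HM Hna HM' (F _ _ HM')).
    destruct HN as [HN | [HN | [e HN]]];
      [left; exact HN | right; left; exact HN | right; right; exact (conj e (conj HN (F _ _ HN)))].
Qed.

Section Absorption.
Hypothesis la_h_evaluates : la_e = EEv -> la_h <> HId.
Hypothesis ar2_h_evaluates : ar2_e = EEv -> ar2_h <> HId.

Lemma hstep_after_estep pe ph N m N' :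
  (pe = EEv -> ph <> HId) ->
  estep pe (fun a b => EV a b /\ forall c, HY b c -> HY a c) N m ->
  hstep ph EV HY m N' -> hstep ph EV HY N N'.
Proof.
  intros Hph [[e ->] | [e [HN IH]]] Hm; [exact Hm |].
  destruct Hm as [[h _] | [[h Hm] | [h Hm]]].
  - contradiction (Hph e h).
  - right; left; split; [exact h | exact (ev_trans _ _ _ HN Hm)].
  - right; right; split; [exact h | exact (IH _ Hm)].
Qed.

Lemma estep_before_hstep pe ph N N' :
  (pe = EEv -> ph <> HId) ->
  hstep ph EV (fun a b => HY a b /\ exists m, EV a m /\ HY m b) N N' ->
  exists m, estep pe EV N m /\ hstep ph EV HY m N'.
Proof.
  intros Hph HN. destruct pe.
  - exists N; split; [left; auto |].
    revert HN; apply hstep_impl; tauto.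
  - destruct HN as [[h _] | [[h HN] | [h [_ [m [HNm Hm]]]]]].
    + contradiction (Hph eq_refl h).
    + exists N'; split; [right; auto |].
      right; left; split; [exact h | exact (ev_idempotent _ _ HN)].
    + exists m; split; [right; auto | right; right; auto].
Qed.

Lemma hy_of_ev_hy t m : EV t m -> forall t', HY m t' -> HY t t'.
Proof.
  revert t m.
  apply (ev_ind_nested (fun t m => forall t', HY m t' -> HY t t')).
  - auto.
  - auto.
  - intros B B' e HB IHB t' H. inversion H as [| B0 B'' Hh | |]; subst B0 t'.
    apply hy_abs. apply (hstep_after_estep la_e la_h B B'); [exact la_h_evaluates | | exact Hh].
    right; auto.
  - intros M N B N' B' HM _ HN _ IHB t' H. apply (hy_con _ _ _ _ _ M N B N'); auto.
    revert HN; apply estep_impl; tauto.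
  - intros M N M' N' HM _ Hna HN t' H.
    inversion H as [| | M0 N0 B0 N0' B0' HM0 HN0 HB0 | M0 N0 M0' M0'' N0' HM0 Hna0 HM0' HN0]; subst.
    + rewrite <- (ev_fixed _ _ _ HM HM0) in Hna. contradiction (Hna I).
    + rewrite (ev_fixed _ _ _ HM HM0) in HM0'.
      apply (hy_neu _ _ _ _ _ M N M'); auto.
      exact (hstep_after_estep ar2_e ar2_h N N' N0' ar2_h_evaluates HN HN0).
Qed.

Lemma hy_factors_through_ev t t' : HY t t' -> exists m, EV t m /\ HY m t'.
Proof.
  revert t t'.
  apply (hy_ind_nested (fun t t' => exists m, EV t m /\ HY m t')).
  - intros x; exists (Var x); split; constructor.
  - intros B B' HB.
    destruct (estep_before_hstep la_e la_h B B' la_h_evaluates HB) as [m [HBm Hm]].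
    exists (Lam m); split; [exact (ev_Lam_of_estep _ _ HBm) | exact (hy_abs _ _ _ _ _ _ _ Hm)].
  - intros M N B N' B' HM HN _ [m [HBm Hm]].
    exists m; split; [exact (ev_con _ _ _ _ _ _ _ _ HM HN HBm) | exact Hm].
  - intros M N M' M'' N' HM Hna HM' _ HN.
    destruct (estep_before_hstep ar2_e ar2_h N N' ar2_h_evaluates HN) as [N1 [HN1 HN1']].
    exists (App M' N1); split; [exact (ev_neu _ _ _ _ _ _ _ HM Hna HN1) |].
    exact (hy_neu _ _ _ _ _ _ _ _ _ _ (ev_idempotent _ _ HM) Hna HM' HN1').
Qed.

Lemma hy_absorbs_ev t t' : (exists m, EV t m /\ HY m t') <-> HY t t'.
Proof.
  split.
  - intros [m [Htm Hm]]; exact (hy_of_ev_hy _ _ Htm _ Hm).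
  - apply hy_factors_through_ev.
Qed.

End Absorption.
End Uniform.

Theorem mainTheorem11 (la_e ar1_e ar2_e : echoice) (la_r ar2_r : rchoice) :
  valid_params la_e ar2_e la_r ar2_r ->
  forall t t' : term,
    (exists m, ev la_e ar1_e ar2_e t m /\
               hy la_e ar1_e ar2_e (hchoice_of la_e la_r) (hchoice_of ar2_e ar2_r) m t')
    <-> hy la_e ar1_e ar2_e (hchoice_of la_e la_r) (hchoice_of ar2_e ar2_r) t t'.
Proof.
  intros _ t t'.
  apply hy_absorbs_ev; intros ->; apply hchoice_of_EEv_neq_id.
Qed.
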